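(* Let $p$ be an odd prime, let $W_p=U\rtimes C_p$ be the wreath product $C_2\wr C_p$, let $T$ be its center, and let $G=W_p/T=V\rtimes C$ where $V=U/T$ and $C$ is the image of $C_p$. Then the automorphism group $\mathrm{Aut}(G)$ acts transitively on $G\setminus V$.
   Context: Here $U=\mathbb{F}_2^{\,p}$ and a generator of the cyclic group $C_p$ of order $p$ acts on $U$ by cyclically permuting coordinates, and $W_p=U\rtimes C_p$. The center of $W_p$ is $T=\{(0,\dots,0),(1,\dots,1)\}\subseteq U$, so $V=U/T$ is an $\mathbb{F}_2$-vector space of dimension $p-1$ which is a normal subgroup of $G$, and $G=V\rtimes C$ with $C$ cyclic of order $p$. *)

From mathcomp Require Import all_boot all_order all_fingroup all_solvable.
Set Implicit Arguments. Unset Strict Implicit. Unset Printing Implicit Defensive.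

(* The wreath product W_p = C_2 wr C_p = U >| C_p, realized as its natural
   (faithful) permutation action on 'I_p * bool: the base group U = F_2^p
   acts by flipping the bool in the fibres, C_p by cycling the coordinates. *)

Definition flip_fun p (i : 'I_p) (x : 'I_p * bool) : 'I_p * bool :=
  if x.1 == i then (x.1, ~~ x.2) else x.

Lemma flip_fun_inj p (i : 'I_p) : injective (flip_fun i).
Proof.
have K : cancel (flip_fun i) (flip_fun i).
  case=> a b; rewrite /flip_fun /=; case: (a =P i) => [->|/eqP/negbTE E] /=.
    by rewrite eqxx negbK.
  by rewrite E.
exact: can_inj K.
Qed.

Definition flip p (i : 'I_p) : {perm 'I_p * bool} := perm (@flip_fun_inj p i).

Definition rot_fun p (x : 'I_p * bool) : 'I_p * bool := (ordS x.1, x.2).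

Lemma rot_fun_inj p : injective (@rot_fun p).
Proof. move=> [a b] [c d] H; have E1 : ordS a = ordS c := f_equal fst H. have E2 : b = d := f_equal snd H. by rewrite (ordS_inj E1) E2. Qed.

Definition rot p : {perm 'I_p * bool} := perm (@rot_fun_inj p).

Definition Ugrp p : {group {perm 'I_p * bool}} := <<[set flip i | i : 'I_p]>>%G.
Definition Cgrp p : {group {perm 'I_p * bool}} := <[rot p]>%G.
Definition Wgrp p : {group {perm 'I_p * bool}} := (Ugrp p <*> Cgrp p)%G.
Definition Tgrp p : {group {perm 'I_p * bool}} := 'Z(Wgrp p)%G.

From Pilot Require Import Defs.
From mathcomp Require Import all_boot all_order all_fingroup all_solvable.
Set Implicit Arguments. Unset Strict Implicit. Unset Printing Implicit Defensive.
Local Open Scope group_scope.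

(* An element of G \ V lifts to u r^k with u in U = F_2^p and p not dividing
   k.  The coordinate permutation i |-> k i normalizes W and T and conjugates r
   to r^k, which reduces to k = 1.  For u = h, solving g(i+1) + g(i) = h(i) + c
   around the p-cycle (possible as p is odd) shows that u r is U-conjugate to r
   times the central constant vector c.  So G \ V is a single orbit under conjugation by
   elements normalizing G, and it is Aut(G)-stable because
   V = {x in G | x^2 = 1}, G/V having odd order p. *)

(* g is the partial xor-sum of h + c; taking c to be the total xor-sum of h
   makes g close up around the cycle, since n - 1 is even. *)
Lemma cyclic_xor_difference n (h : 'I_n -> bool) : odd n ->
  exists g : 'I_n -> bool, exists c, forall i, g (ordS i) (+) g i = h i (+) c.
Proof.
case: n h => // n h /= even_n.
pose s m := \big[addb/false]_(j < m) h (inord j).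
set c := s n.+1.
exists (fun i => s i (+) odd i && c), c => i.
have [lt_in | le_ni] := ltnP i n.
  have -> : ordS i = i.+1 :> nat by rewrite /= modn_small.
  rewrite /s big_ord_recr /= inord_val.
  by case: (odd i); case: c; case: (h i); case: (\big[addb/false]_(j < i) _).
have i_n : i = inord n.
  by apply: val_inj; rewrite /= inordK //; apply/eqP; rewrite eqn_leq le_ni andbT -ltnS.
have -> : ordS i = 0 :> nat by rewrite /= i_n inordK // modnn.
rewrite /c i_n inordK // /s big_ord0 big_ord_recr (negbTE even_n) /=.
by case: (h _); case: (\big[addb/false]_(j < n) _).
Qed.

Lemma expg_odd_sqr1 (gT : finGroupType) (x : gT) n :
  x ^+ 2 = 1 -> odd n -> x ^+ n = x.
Proof.
move=> sq1 odd_n.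
by rewrite -(odd_double_half n) odd_n -mul2n expgD expgM sq1 expg1n mulg1.
Qed.

Lemma conj_in_orbit_Aut (gT : finGroupType) (G : {group gT}) x h :
  x \in G -> h \in 'N(G) -> x ^ h \in orbit 'P (Aut G) x.
Proof.
move=> Gx Nh; apply/orbitP; exists (conj_aut G h).
  by apply: subsetP (Aut_conj_aut _ 'N(G)) _ _; apply: mem_morphim.
by rewrite /= apermE norm_conj_autE.
Qed.

Section Wreath.

Variable p : nat.
Hypothesis p_gt0 : 0 < p.

Local Notation point := ('I_p * bool)%type.
Local Notation U := (Ugrp p).
Local Notation C := (Cgrp p).
Local Notation W := (Wgrp p).
Local Notation T := (Tgrp p).
Local Notation r := (Defs.rot p).

Definition flips_fun (f : 'I_p -> bool) (a : point) : point := (a.1, a.2 (+) f a.1).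

Lemma flips_funK f : involutive (flips_fun f).
Proof. by case=> i b; rewrite /flips_fun /= -addbA addbb addbF. Qed.

Definition flips f : {perm point} := perm (inv_inj (@flips_funK f)).

Lemma flipsE f a : flips f a = (a.1, a.2 (+) f a.1).
Proof. by rewrite permE. Qed.

Lemma eq_flips f g : f =1 g -> flips f = flips g.
Proof. by move=> eq_fg; apply/permP => a; rewrite !flipsE eq_fg. Qed.

Lemma flipsM f g : flips f * flips g = flips (fun i => f i (+) g i).
Proof. by apply/permP => a; rewrite permM !flipsE /= addbA. Qed.

Lemma flips_false : flips (fun=> false) = 1.
Proof. by apply/permP => -[i b]; rewrite perm1 flipsE addbF. Qed.

Lemma flipsK f : flips f * flips f = 1.
Proof. by rewrite flipsM -flips_false; apply: eq_flips => i; rewrite addbb. Qed.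

Lemma flipsV f : (flips f)^-1 = flips f.
Proof. by apply/eqP; rewrite eq_invg_mul flipsK. Qed.

Lemma flip_flips i : flip i = flips (pred1 i).
Proof.
apply/permP => -[j b]; rewrite flipsE permE /flip_fun /=.
by case: (j == i); rewrite ?addbT ?addbF.
Qed.

Lemma prod_flip s : uniq s -> \prod_(i <- s) flip i = flips (fun j => j \in s).
Proof.
elim: s => [_ | i s IHs /= /andP[s'i uniq_s]]; first by rewrite big_nil -flips_false.
rewrite big_cons IHs // flip_flips flipsM; apply: eq_flips => j /=.
by rewrite in_cons; case: eqP => [->|_]; rewrite ?(negbTE s'i).
Qed.

Lemma flips_in_U f : flips f \in U.
Proof.
rewrite (@eq_flips _ (fun j => j \in enum f)) => [|i]; last by rewrite mem_enum.
rewrite -prod_flip ?enum_uniq //; apply: group_prod => i _.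
by apply: mem_gen; apply: imset_f.
Qed.

Lemma U_flipsP u : reflect (exists f, u = flips f) (u \in U).
Proof.
apply: (iffP idP) => [|[f ->]]; last exact: flips_in_U.
have flips_group : group_set [set flips f | f : {ffun 'I_p -> bool}].
  apply/group_setP; split.
    apply/imsetP; exists [ffun=> false]; rewrite // -flips_false.
    by apply: eq_flips => i; rewrite ffunE.
  move=> _ _ /imsetP[f _ ->] /imsetP[g _ ->].
  apply/imsetP; exists [ffun i => f i (+) g i] => //.
  by rewrite flipsM; apply: eq_flips => i; rewrite ffunE.
have : U \subset Group flips_group.
  rewrite gen_subG; apply/subsetP => _ /imsetP[i _ ->]; rewrite flip_flips.
  by apply/imsetP; exists [ffun j => j == i] => //; apply: eq_flips => j; rewrite ffunE.
by move=> /subsetP/(_ u) /[apply] /imsetP[f _ ->]; exists f.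
Qed.

Definition coord_fun (s : 'I_p -> 'I_p) (a : point) : point := (s a.1, a.2).

Lemma coord_fun_inj s : injective s -> injective (coord_fun s).
Proof. by move=> s_inj [i b] [j c] [/s_inj -> ->]. Qed.

Definition coord_perm s (s_inj : injective s) : {perm point} :=
  perm (coord_fun_inj s_inj).

Lemma coord_permE s (s_inj : injective s) a : coord_perm s_inj a = (s a.1, a.2).
Proof. by rewrite permE. Qed.

Lemma conj_flips_coord s (s_inj : injective s) f :
  flips f ^ coord_perm s_inj = flips (f \o invF s_inj).
Proof.
apply/permP => b; rewrite -(permKV (coord_perm s_inj) b) permJ.
by rewrite !flipsE !coord_permE /= invF_f.
Qed.

Lemma coord_perm_norm_U s (s_inj : injective s) : coord_perm s_inj \in 'N(U).
Proof.
rewrite inE; apply/subsetP => _ /imsetP[u /U_flipsP[f ->] ->].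
by rewrite conj_flips_coord flips_in_U.
Qed.

Lemma rot_coord : r = coord_perm (@ordS_inj p).
Proof. by apply/permP => a; rewrite !permE. Qed.

Lemma rot_norm_U : r \in 'N(U).
Proof. by rewrite rot_coord coord_perm_norm_U. Qed.

Lemma W_eq_UC : W :=: U * C.
Proof. by rewrite /Wgrp /= norm_joinEr // cycle_subG rot_norm_U. Qed.

Lemma flips_in_W f : flips f \in W.
Proof. exact: subsetP (joing_subl _ _) _ (flips_in_U f). Qed.

Lemma rot_in_W : r \in W.
Proof. exact: subsetP (joing_subr _ _) r (cycle_id r). Qed.

Lemma W_norm_T : W \subset 'N(T).
Proof. exact: normal_norm (center_normal _). Qed.

Lemma flips_const_in_T c : flips (fun=> c) \in T.
Proof.
rewrite inE flips_in_W /= centY inE; apply/andP; split.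
  rewrite cent_gen; apply/centP => _ /imsetP[i _ ->].
  by rewrite flip_flips /commute !flipsM; apply: eq_flips => j; rewrite addbC.
by rewrite cent_cycle; apply/cent1P/permP => a; rewrite !permM !flipsE !permE.
Qed.

Lemma rot_expE k a : (r ^+ k) a = (Ordinal (ltn_pmod (a.1 + k) p_gt0), a.2).
Proof.
elim: k => [|k IHk].
  case: a => i b; rewrite expg0 perm1; congr (_, _).
  by apply: val_inj; rewrite /= addn0 modn_small.
rewrite expgSr permM IHk permE; congr (_, _); apply: val_inj.
by rewrite /= addnS -addn1 modnDml addn1.
Qed.

Lemma rot_expp : r ^+ p = 1.
Proof.
apply/permP => -[i b]; rewrite rot_expE perm1; congr (_, _).
by apply: val_inj; rewrite /= modnDr modn_small.
Qed.

Lemma expp_in_U w : w \in W -> w ^+ p \in U.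
Proof.
rewrite W_eq_UC => /mulsgP[u _ Uu /cycleP[j ->] ->].
have rj_NU : r ^+ j \in 'N(U) by rewrite groupX ?rot_norm_U.
have u_NU : u \in 'N(U) := subsetP (normG U) u Uu.
apply: coset_idr; first by rewrite groupX ?groupM.
rewrite morphX ?groupM // morphM //= coset_id // mul1g -morphX //.
by rewrite -expgM mulnC expgM rot_expp expg1n morph1.
Qed.

Lemma flips_rot_conj (p_odd : odd p) h :
  exists g c, flips h * r = r ^ flips g * flips (fun=> c).
Proof.
have [g [c gc]] := cyclic_xor_difference h p_odd.
exists g, c; apply/permP => -[i b].
rewrite conjgE flipsV !permM !flipsE rot_coord !coord_permE /=; congr (_, _).
by move: (gc i) => {gc}; case: b (h i) (g i) (g (ordS i)) c => [] [] [] [] [].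
Qed.

Definition scale k (i : 'I_p) : 'I_p := Ordinal (ltn_pmod (k * i) p_gt0).

Section Scale.

Hypothesis p_prime : prime p.
Variable k : nat.
Hypothesis p_ndvd_k : ~~ (p %| k).

Lemma scale_inj : injective (scale k).
Proof.
suff le_inj (i j : 'I_p) : i <= j -> scale k i = scale k j -> i = j.
  by move=> i j; case: (leqP i j) => [/le_inj // | /ltnW/le_inj eq_ji /esym/eq_ji].
move=> le_ij /(congr1 val) /= /eqP.
rewrite eq_sym eqn_mod_dvd ?leq_mul2l ?le_ij ?orbT // -mulnBr Euclid_dvdM //.
by rewrite (negbTE p_ndvd_k) /= -eqn_mod_dvd // !modn_small // => /eqP/val_inj.
Qed.

Local Notation sigma := (coord_perm scale_inj).

Lemma conj_rot_scale : r ^ sigma = r ^+ k.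
Proof.
apply/permP => b; rewrite -(permKV sigma b) permJ rot_expE !coord_permE.
rewrite rot_coord coord_permE; congr (_, _); apply: val_inj.
by rewrite /= modnMmr modnDml mulnSr.
Qed.

Lemma scale_norm_W : sigma \in 'N(W).
Proof.
rewrite -sub1set /Wgrp /= normsY // sub1set ?coord_perm_norm_U //.
by rewrite inE /Cgrp /= -cycleJ conj_rot_scale cycle_subG mem_cycle.
Qed.

Lemma scale_norm_T : sigma \in 'N(T).
Proof.
rewrite -sub1set; apply: char_norm_trans (center_char _) _.
by rewrite sub1set scale_norm_W.
Qed.

Lemma flips_scale f : flips f = flips (f \o scale k) ^ sigma.
Proof. by rewrite conj_flips_coord; apply: eq_flips => i; rewrite /= f_invF. Qed.

End Scale.

Section Quotient.

Hypothesis p_prime : prime p.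
Hypothesis p_odd : odd p.

Local Notation G := (W / T).
Local Notation V := (U / T).

Lemma quoU_sqr1 x : x \in G -> (x \in V) = (x ^+ 2 == 1).
Proof.
move=> Gx; apply/idP/eqP => [/morphimP[u u_NT Uu ->] | sq1].
  case/U_flipsP: Uu u_NT => f -> f_NT.
  by rewrite -morphX //= expgS expg1 flipsK morph1.
rewrite -(expg_odd_sqr1 sq1 p_odd).
case/morphimP: Gx => w w_NT Ww ->.
by rewrite -morphX // mem_quotient ?expp_in_U.
Qed.

Lemma Aut_quo_setD a x : a \in Aut G -> x \in G :\: V -> a x \in G :\: V.
Proof.
move=> Aa /setDP[Gx V'x]; have Gax := Aut_closed Aa Gx.
have aX : a (x ^+ 2) = a x ^+ 2 by rewrite -(autmE Aa) morphX.
have a1 : a 1 = 1 by rewrite -(autmE Aa) morph1.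
by rewrite inE Gax andbT quoU_sqr1 // -aX -a1 (inj_eq perm_inj) -quoU_sqr1.
Qed.

Lemma coset_rot_in_setD : coset T r \in G :\: V.
Proof.
have p_gt2 : 2 < p.
  by rewrite ltn_neqAle prime_gt1 // andbT; apply: contraTneq p_odd => <-.
have r_NT : r \in 'N(T) := subsetP W_norm_T r rot_in_W.
have Gr : coset T r \in G := mem_quotient T rot_in_W.
rewrite inE Gr andbT quoU_sqr1 //; apply/eqP; rewrite -morphX //.
move=> /(coset_idr (groupX 2 r_NT)) /setIP[_ /centP r2_cent].
pose i0 := Ordinal p_gt0.
have := r2_cent (flips (pred1 i0)) (flips_in_W _).
move=> /(congr1 (fun x : {perm point} => (x (i0, false)).2)).
rewrite !permM !flipsE rot_coord !coord_permE /= eqxx.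
by case: eqP => // /(congr1 val); rewrite /= !modn_small // ltnW.
Qed.

Lemma conj_rot_mod_T w : w \in W -> w \notin U ->
  exists2 n, n \in 'N(W) :&: 'N(T) & coset T w = coset T (r ^ n).
Proof.
rewrite {1}W_eq_UC => /mulsgP[_ _ /U_flipsP[f ->] /cycleP[k ->] ->] U'w.
have p'k : ~~ (p %| k).
  apply: contra U'w => /dvdnP[m ->].
  by rewrite mulnC expgM rot_expp expg1n mulg1 flips_in_U.
pose sigma := coord_perm (scale_inj p_prime p'k).
have sigma_NW : sigma \in 'N(W) := scale_norm_W p_prime p'k.
have sigma_NT : sigma \in 'N(T) := scale_norm_T p_prime p'k.
have [g [c rot_eq]] := flips_rot_conj p_odd (f \o scale k).
have g_N : flips g \in 'N(W) :&: 'N(T).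
  by rewrite inE (subsetP W_norm_T) ?(subsetP (normG W)) ?flips_in_W.
exists (flips g * sigma); first by rewrite groupM // inE sigma_NW.
have cT : flips (fun=> c) ^ sigma \in T by rewrite memJ_norm ?flips_const_in_T.
rewrite (flips_scale p_prime p'k) -(conj_rot_scale p_prime p'k) -conjMg rot_eq.
by rewrite conjMg coset_kerr // conjgM.
Qed.

Lemma quo_setD_conj_rot y :
  y \in G :\: V -> exists2 h, h \in 'N(G) & y = coset T r ^ h.
Proof.
case/setDP => /morphimP[w _ Ww ->] V'w.
have U'w : w \notin U by apply: contra V'w; apply: mem_quotient.
have [n /setIP[n_NW n_NT] w_eq] := conj_rot_mod_T Ww U'w.
exists (coset T n); first by apply/normP; rewrite -quotientJ // (normP n_NW).
by rewrite -morphJ // (subsetP W_norm_T) ?rot_in_W.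
Qed.

End Quotient.

End Wreath.

Theorem lemma2 (p : nat) (p_prime : prime p) (p_odd : odd p) :
  [transitive Aut (Wgrp p / Tgrp p),
     on (Wgrp p / Tgrp p) :\: (Ugrp p / Tgrp p) | 'P].
Proof.
have p_gt0 := prime_gt0 p_prime.
apply/imsetP; exists (coset (Tgrp p) (Defs.rot p)).
  exact: coset_rot_in_setD.
apply/setP => y; apply/idP/idP => [Sy | /orbitP[a Aa <-]]; last first.
  by rewrite /= apermE Aut_quo_setD // coset_rot_in_setD.
have [h Nh ->] := quo_setD_conj_rot p_gt0 p_prime p_odd Sy.
by rewrite conj_in_orbit_Aut // mem_quotient // rot_in_W.
Qed.
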